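(* Let $A$ be an $n\times n$ complex matrix and let $P(w)=\prod_{\ell=1}^{p}(w-w_{\ell})$ be a polynomial with complex roots listed in a chosen order such that $P(A)=0$. For $k=0,\dots,p$ set $E_{k}=\prod_{\ell=1}^{k}(A-w_{\ell})\,\mathbb{C}^n$ and $N_{k}=\dim E_{k}$ (so $N_0=n$ and $N_p=0$), and for $1\le \ell\le p-1$ set $\lambda_{\ell}=w_{\ell+1}-w_{\ell}$. Fix $j$ with $1\le j\le p-1$ and $\lambda_j\neq 0$ (i.e. $w_j\neq w_{j+1}$), and let $(N'_k)$, $(\lambda'_\ell)$ denote the same quantities computed from the reordered factorization in which the $j$-th and $(j+1)$-th linear factors $(w-w_j)$ and $(w-w_{j+1})$ are interchanged. Then $$N'_k=N_k\ (k\neq j),\qquad N'_j=N_{j-1}+N_{j+1}-N_j,$$ that is, the dimension vector changes by the simple Weyl reflection at the node $j$ of the linear ($A$-type) chain with nodes $0,1,\dots,p-1$ (node $0$ carrying $N_0=n$), and the couplings change by the corresponding reflection $$\lambda'_{j-1}=\lambda_{j-1}+\lambda_j,\qquad \lambda'_j=-\lambda_j,\qquad \lambda'_{j+1}=\lambda_{j+1}+\lambda_j,\qquad \lambda'_\ell=\lambda_\ell\ (\ell\neq j-1,j,j+1),$$ where for $j=1$ the coupling $\lambda_0$ attached to node $0$ is any quantity of the form $c+w_1$ (with $c$ independent of the ordering) and $\lambda'_0=c+w'_1=c+w_2=\lambda_0+\lambda_1$, and where couplings with indices outside $0,\dots,p-1$ are ignored.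
   Context: In the paper, for a Fuchsian system with residue matrix $A_i$ at a marked point $z_i$, the data $(N_{i,k})$ are the dimensions of the filtration of the fiber, attached to the nodes $\bullet_{i,k}$ of the $i$-th branch of a star-shaped quiver whose central node $\star$ carries $n$; the Fayet–Iliopoulos coupling at $\bullet_{i,\ell}$ ($\ell\ge1$) is $\lambda_{i,\ell}=w_{i,\ell+1}-w_{i,\ell}$ and at the central node it is $\lambda_\star=\sum_i w_{i,1}$. The (Seiberg duality $=$) Weyl reflection at a simple root $\alpha_\sigma$ with $\lambda_\sigma\neq0$ acts by $\boldsymbol{N}\mapsto \boldsymbol{N}-\langle\boldsymbol{N},\alpha_\sigma\rangle\alpha_\sigma$ and $\lambda_\tau\mapsto\lambda_\tau-\langle\alpha_\tau,\alpha_\sigma\rangle\lambda_\sigma$, where $\langle-,-\rangle$ is the symmetric bilinear form given by the Cartan matrix of the (star-shaped) graph ($2$ on the diagonal, $-1$ for adjacent nodes, $0$ otherwise). The paper's statement is phrased as: the reflection at node $\bullet_{i,\ell}$ (with $\lambda_{i,\ell}\neq 0$) has the effect of interchanging the order of the two factors $(w-w_{i,\ell})$ and $(w-w_{i,\ell+1})$ of $P_i(w)$; the claim above is this statement written out on dimension vectors and couplings. *)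

From HB Require Import structures.
From mathcomp Require Import all_boot all_order all_algebra.
From mathcomp Require Import complex.
Set Implicit Arguments. Unset Strict Implicit. Unset Printing Implicit Defensive.
Import Order.TTheory GRing.Theory Num.Theory.
Local Open Scope ring_scope.

(* roots are indexed 1-based: w 1, ..., w p *)
Definition filt_op (F : fieldType) (n : nat) (A : 'M[F]_n) (w : nat -> F) (k : nat)
  : 'M[F]_n := \prod_(1 <= l < k.+1) (A - (w l)%:M).

Definition Ndim (F : fieldType) (n : nat) (A : 'M[F]_n) (w : nat -> F) (k : nat) : nat :=
  \rank (filt_op A w k).

Definition coupling (F : fieldType) (c : F) (w : nat -> F) (l : nat) : F :=
  if l == 0%N then c + w 1%N else w l.+1 - w l.

Definition swap_roots (F : Type) (j : nat) (w : nat -> F) (l : nat) : F :=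
  if l == j then w j.+1 else if l == j.+1 then w j else w l.

(* Interchanging two adjacent roots w_j, w_{j+1} changes only the partial
   product at step j, because the factors (A - w_l) are polynomials in A and
   commute.  With B = prod_{l<j} (A - w_l), a = w_j and b = w_{j+1}, the row
   spaces of B(A - a) and B(A - b) lie in that of B and their difference is
   (b - a)B, so they span it; and they intersect exactly in the row space of
   B(A - a)(A - b).  The dimension formula for a sum and an intersection of
   subspaces then reads N'_j + N_j = N_{j-1} + N_{j+1}. *)
From HB Require Import structures.
From mathcomp Require Import all_boot all_order all_algebra.
From mathcomp Require Import complex.
From mathcomp Require Import ring zify.
Set Implicit Arguments. Unset Strict Implicit. Unset Printing Implicit Defensive.
Import Order.TTheory GRing.Theory Num.Theory.
Local Open Scope ring_scope.

Lemma comm_scalar_mx (F : comPzRingType) (n : nat) (M : 'M[F]_n) (a : F) :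
  GRing.comm M a%:M.
Proof. by rewrite /GRing.comm -!mulmxE scalar_mxC. Qed.

Lemma comm_sub_scalar (F : comPzRingType) (n : nat) (M N : 'M[F]_n) (a : F) :
  GRing.comm M N -> GRing.comm (M - a%:M) N.
Proof.
move=> MN; apply/commr_sym/commrB; [exact/commr_sym | exact: comm_scalar_mx].
Qed.

Section AdjacentFactors.
Variables (F : fieldType) (n : nat) (A B : 'M[F]_n) (a b : F).
Hypotheses (commAB : GRing.comm A B) (neq_ab : a != b).

Lemma mulmx_sub_scalarC (c : F) : (A - c%:M) *m B = B *m (A - c%:M).
Proof. by rewrite mulmxE; apply: comm_sub_scalar. Qed.

Lemma submx_mul_sub_scalar (c : F) : (B *m (A - c%:M) <= B)%MS.
Proof. by rewrite -mulmx_sub_scalarC submxMl. Qed.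

Lemma mulmx_sub_scalar_diff (C : 'M[F]_n) (c d : F) :
  C *m (A - c%:M) - C *m (A - d%:M) = (d - c) *: C.
Proof.
by rewrite -mulmxBr opprB addrC addrA subrK -raddfB /= mul_mx_scalar.
Qed.

Lemma addsmx_mul_sub_scalar :
  (B *m (A - a%:M) + B *m (A - b%:M) :=: B)%MS.
Proof.
apply/eqmxP/andP; split.
  by rewrite addsmx_sub !submx_mul_sub_scalar.
have neq_ba : b - a != 0 by rewrite subr_eq0 eq_sym.
rewrite -(eqmx_scale _ neq_ba) -mulmx_sub_scalar_diff.
by apply: addmx_sub_adds; rewrite ?eqmx_opp.
Qed.

Lemma capmx_mul_sub_scalar :
  (B *m (A - a%:M) :&: B *m (A - b%:M) :=: B *m (A - a%:M) *m (A - b%:M))%MS.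
Proof.
have commab : (A - a%:M) *m (A - b%:M) = (A - b%:M) *m (A - a%:M).
  by rewrite mulmxE; apply/comm_sub_scalar/commr_sym/comm_sub_scalar.
have swapab : B *m (A - b%:M) *m (A - a%:M) = B *m (A - a%:M) *m (A - b%:M).
  by rewrite -!mulmxA commab.
apply/eqmxP/andP; split; last first.
  have Z_X : B *m (A - a%:M) *m (A - b%:M) = (A - b%:M) *m (B *m (A - a%:M)).
    by rewrite -swapab -mulmx_sub_scalarC mulmxA.
  have Z_Y : B *m (A - a%:M) *m (A - b%:M) = (A - a%:M) *m (B *m (A - b%:M)).
    by rewrite -mulmx_sub_scalarC mulmxA.
  by rewrite sub_capmx {1}Z_X Z_Y !submxMl.
set C := (_ :&: _)%MS.
have neq_ab' : a - b != 0 by rewrite subr_eq0.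
(* (a - b) C = C (A - b) - C (A - a), and both terms lie in B (A - a)(A - b). *)
rewrite -(eqmx_scale _ neq_ab') -mulmx_sub_scalar_diff.
rewrite addmx_sub // ?eqmx_opp.
  by apply: submxMr; rewrite capmxSl.
by rewrite -swapab; apply: submxMr; rewrite capmxSr.
Qed.

Lemma mxrank_mul_sub_scalar :
  (\rank (B *m (A - a%:M)) + \rank (B *m (A - b%:M))
   = \rank B + \rank (B *m (A - a%:M) *m (A - b%:M)))%N.
Proof.
by rewrite -mxrank_sum_cap addsmx_mul_sub_scalar capmx_mul_sub_scalar.
Qed.

End AdjacentFactors.

Section SwapRoots.
Variables (T : Type) (j : nat) (w : nat -> T).

Lemma swap_roots_at : swap_roots j w j = w j.+1.
Proof. by rewrite /swap_roots eqxx. Qed.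

Lemma swap_roots_at_succ : swap_roots j w j.+1 = w j.
Proof. by rewrite /swap_roots eqxx ifN // neq_ltn ltnSn orbT. Qed.

Lemma swap_roots_out l : l != j -> l != j.+1 -> swap_roots j w l = w l.
Proof. by rewrite /swap_roots => /negbTE -> /negbTE ->. Qed.

End SwapRoots.

Section Filtration.
Variables (F : fieldType) (n : nat) (A : 'M[F]_n).

Lemma filt_opS (w : nat -> F) k :
  filt_op A w k.+1 = filt_op A w k * (A - (w k.+1)%:M).
Proof. by rewrite /filt_op big_nat_recr. Qed.

Lemma filt_op_pred (w : nat -> F) k : (0 < k)%N ->
  filt_op A w k = filt_op A w k.-1 * (A - (w k)%:M).
Proof. by case: k => // k _; apply: filt_opS. Qed.

Lemma comm_filt_op (w : nat -> F) k : GRing.comm A (filt_op A w k).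
Proof.
apply: commr_prod => l _; apply/commr_sym/comm_sub_scalar/commr_refl.
Qed.

Lemma eq_filt_op (w1 w2 : nat -> F) k :
  (forall l, (0 < l <= k)%N -> w1 l = w2 l) -> filt_op A w1 k = filt_op A w2 k.
Proof.
by move=> eq_w; apply: eq_big_nat => l /andP[l_gt0 l_le]; rewrite eq_w ?l_gt0.
Qed.

Variables (w : nat -> F) (j : nat).
Hypothesis j_gt0 : (0 < j)%N.
Local Notation w' := (swap_roots j w).

Lemma filt_op_swap_lt k : (k < j)%N -> filt_op A w' k = filt_op A w k.
Proof. by move=> k_lt; apply: eq_filt_op => l ?; rewrite swap_roots_out //; lia. Qed.

Lemma filt_op_swap_at :
  filt_op A w' j = filt_op A w j.-1 * (A - (w j.+1)%:M).
Proof.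
by rewrite filt_op_pred // swap_roots_at filt_op_swap_lt // ltn_predL.
Qed.

Lemma filt_op_swap_gt k : (j < k)%N -> filt_op A w' k = filt_op A w k.
Proof.
elim: k => // k IHk; rewrite ltnS leq_eqVlt => /predU1P[<-|lt_jk].
  rewrite filt_opS filt_op_swap_at swap_roots_at_succ.
  rewrite filt_opS (filt_op_pred w j_gt0) -!mulrA.
  by congr (_ * _); apply/comm_sub_scalar/commr_sym/comm_sub_scalar.
by rewrite !filt_opS IHk // swap_roots_out //; lia.
Qed.

Lemma Ndim_swap_out k : k != j -> Ndim A w' k = Ndim A w k.
Proof.
rewrite neq_ltn /Ndim => /orP[lt_kj|lt_jk].
  by rewrite filt_op_swap_lt.
by rewrite filt_op_swap_gt.
Qed.

Lemma Ndim_swap_at : w j != w j.+1 ->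
  (Ndim A w' j + Ndim A w j = Ndim A w j.-1 + Ndim A w j.+1)%N.
Proof.
move=> neq_w; rewrite /Ndim filt_op_swap_at filt_opS (filt_op_pred w j_gt0).
rewrite -!mulmxE addnC.
exact: mxrank_mul_sub_scalar (comm_filt_op w j.-1) neq_w.
Qed.

End Filtration.

Section Couplings.
Variables (F : fieldType) (c : F) (w : nat -> F) (j : nat).
Local Notation w' := (swap_roots j w).

Lemma coupling_swap_pred : (0 < j)%N ->
  coupling c w' j.-1 = coupling c w j.-1 + coupling c w j.
Proof.
case: j => // [[|m]] _; rewrite /coupling /= swap_roots_at; first ring.
by rewrite swap_roots_out; [ring | lia | lia].
Qed.

Lemma coupling_swap_at : (0 < j)%N -> coupling c w' j = - coupling c w j.
Proof.
move=> j_gt0; rewrite /coupling gtn_eqF //.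
by rewrite swap_roots_at swap_roots_at_succ opprB.
Qed.

Lemma coupling_swap_succ : (0 < j)%N ->
  coupling c w' j.+1 = coupling c w j.+1 + coupling c w j.
Proof.
move=> j_gt0; rewrite /coupling /= gtn_eqF // swap_roots_at_succ.
by rewrite swap_roots_out; [ring | lia | lia].
Qed.

Lemma coupling_swap_out l : l != j.-1 -> l != j -> l != j.+1 ->
  coupling c w' l = coupling c w l.
Proof.
move=> ? ? ?; rewrite /coupling.
by case: eqP => [l0|_]; rewrite !swap_roots_out //; lia.
Qed.

End Couplings.

Theorem mainTheorem1 (R : rcfType) (n p : nat) (A : 'M[R[i]]_n)
    (w : nat -> R[i]) (j : nat) :
  \prod_(1 <= l < p.+1) (A - (w l)%:M) = 0 ->
  (0 < j)%N -> (j < p)%N -> w j != w j.+1 ->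
  let w' := swap_roots j w in
  [/\ (forall k, (k <= p)%N -> k != j -> Ndim A w' k = Ndim A w k),
      (Ndim A w' j)%:Z = (Ndim A w j.-1)%:Z + (Ndim A w j.+1)%:Z - (Ndim A w j)%:Z
    & forall c : R[i],
      [/\ coupling c w' j.-1 = coupling c w j.-1 + coupling c w j,
          coupling c w' j = - coupling c w j,
          (j.+1 < p)%N -> coupling c w' j.+1 = coupling c w j.+1 + coupling c w j
        & forall l, (l < p)%N -> l != j.-1 -> l != j -> l != j.+1 ->
            coupling c w' l = coupling c w l]].
Proof.
move=> _ j_gt0 _ neq_w w'; rewrite {}/w'; split.
- by move=> k _; apply: Ndim_swap_out.
- by apply/eqP; rewrite eq_sym subr_eq -!PoszD Ndim_swap_at.
- move=> c; split.
  + exact: coupling_swap_pred.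
  + exact: coupling_swap_at.
  + by move=> _; apply: coupling_swap_succ.
  + by move=> l _; apply: coupling_swap_out.
Qed.
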